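(* Let $m\ge 3$ and let $X$ be a finite connected $2$-connected graph such that the number $N_e$ of maximal spanning trees of $X$ not containing the edge $e$ equals a constant $N$ independent of $e$. Let $\widetilde{X}$ be its $\mathbb{Z}_m$-homology cover with graph metric $d$, and let $d_Q$ be as defined below. Then for all $x,y\in\widetilde{X}$, $$d_Q(x,y)<\mathrm{girth}(X)\iff d(x,y)<\mathrm{girth}(X),$$ and if these inequalities hold then $d_Q(x,y)=d(x,y)$.
   Context: A graph is $2$-connected if removing any single edge leaves it connected; girth is the length of a shortest cycle. $\mathbb{Z}_m$-homology cover: fix orientations of the edges of $X$; for a maximal spanning tree $T$ with complementary edges $e_1,\dots,e_r$ (a free basis of $\pi_1(X)$), let $\rho:\pi_1(X)\to K=\pi_1(X)/[\pi_1(X),\pi_1(X)]\pi_1(X)^m\cong\oplus^r\mathbb{Z}_m$; $\widetilde{X}$ has vertices $V(X)\times K$, edges $E(X)\times K$, where for $e$ from $v$ to $w$ the edge $(e,k)$ joins $(v,k)$ to $(w,k)$ if $e\in T$ and to $(w,\rho(e)k)$ if $e\notin T$ (independent of $T$ up to isomorphism over $X$); $\pi:\widetilde{X}\to X$ is the projection. For a maximal tree $T$, the clouds are the sets $V(X)\times\{k\}$, $k\in K$; $C^T_x$ denotes the cloud containing $x$, and clouds are identified with elements of $\oplus^r\mathbb{Z}_m$; $d_T$ is the word metric on $\oplus^r\mathbb{Z}_m$ with respect to the generators $\rho(e_1),\dots,\rho(e_r)$ (one generator per factor). The metric $d_Q$: for $x,y\in\widetilde{X}$ choose a $d$-geodesic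 $\gamma$ from $x$ to $y$, and for an edge $e$ of $X$ let $\phi(e,x,y)\in\{0,\dots,m-1\}$ be the residue mod $m$ of $\big||\pi^{-1}(e)\cap\gamma|-|\pi^{-1}(e^{-1})\cap\gamma|\big|$, where these count the traversals by $\gamma$ of lifts of $e$ in the positive, respectively negative, direction. Then $d_Q(x,y)=\sum_{e\in E(X)}\sum_{T:\,e\notin T}\frac{1}{N_e}\min\{\phi(e,x,y),m-\phi(e,x,y)\}$, the inner sum over maximal spanning trees not containing $e$. When $N_e=N$ for all $e$ one has $d_Q(x,y)=\frac1N\sum_T d_T(C^T_x,C^T_y)$, summing over all maximal spanning trees $T$. *)

From HB Require Import structures.
From mathcomp Require Import all_boot all_order all_algebra.
From Stdlib Require Import ClassicalEpsilon.
Set Implicit Arguments. Unset Strict Implicit. Unset Printing Implicit Defensive.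
Import Order.TTheory GRing.Theory Num.Theory.

Definition pbool (P : Prop) : bool :=
  if excluded_middle_informative P then true else false.

(* A dart is an edge with a direction
   (true = positive direction src->tgt, false = negative direction).  *)
Section Walks.
Variables (V E : Type) (src tgt : E -> V).

Definition dstart (d : E * bool) : V := if d.2 then src d.1 else tgt d.1.
Definition dend (d : E * bool) : V := if d.2 then tgt d.1 else src d.1.

Fixpoint is_walk (x : V) (p : seq (E * bool)) (y : V) : Prop :=
  match p with
  | [::] => x = y
  | d :: p' => dstart d = x /\ is_walk (dend d) p' y
  end.

(* d-geodesic: a shortest walk from x to y (its length is d(x,y)). *)
Definition geodesic (x : V) (p : seq (E * bool)) (y : V) : Prop :=
  is_walk x p y /\ forall q, is_walk x q y -> (size p <= size q)%N.
End Walks.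

Section FinGraph.
Variables (V E : finType) (src tgt : E -> V).

Definition is_cycle (v : V) (p : seq (E * bool)) : Prop :=
  p <> [::] /\ is_walk src tgt v p v /\ uniq (map fst p)
  /\ uniq (map (dstart src tgt) p).

Definition graph_connected : Prop :=
  forall u v : V, exists p, is_walk src tgt u p v.

(* 2-connected in the sense of the paper: removing any single edge
   leaves the graph connected. *)
Definition two_connected : Prop :=
  forall e : E, forall u v : V,
    exists p, is_walk src tgt u p v /\ all (fun d => d.1 != e) p.

Definition spanning_tree (T : {set E}) : Prop :=
  (forall u v : V, exists p, is_walk src tgt u p v /\ all (fun d => d.1 \in T) p)
  /\ (forall v p, is_cycle v p -> ~ all (fun d => d.1 \in T) p).

Definition trees : {set {set E}} := [set T | pbool (spanning_tree T)].

Definition Ne (e : E) : nat := #|[set T in trees | e \notin T]|.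

(* [lt_girth q] : q < girth(X)  (girth = length of a shortest cycle,
   +infinity if X has no cycle). *)
Definition lt_girth (q : rat) : Prop :=
  forall v p, is_cycle v p -> (q < (size p)%:R)%R.

Variables (m : nat) (T0 : {set E}).

Definition cedge := {e : E | e \notin T0}.
Definition Kgrp := {ffun cedge -> 'Z_m}.

Definition rho (e : E) : Kgrp := [ffun c : cedge => if val c == e then 1%R else 0%R].

Definition cvert := (V * Kgrp)%type.
Definition cedg := (E * Kgrp)%type.
Definition csrc (ek : cedg) : cvert := (src ek.1, ek.2).
Definition ctgt (ek : cedg) : cvert := (tgt ek.1, (ek.2 + rho ek.1)%R).
(* projection pi on edges is [fst]. *)

(* phi(e,x,y) computed from a d-geodesic gamma of the cover *)
Definition npos (e : E) (g : seq (cedg * bool)) : nat :=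
  count (fun d => (d.1.1 == e) && d.2) g.
Definition nneg (e : E) (g : seq (cedg * bool)) : nat :=
  count (fun d => (d.1.1 == e) && ~~ d.2) g.
Definition phi (e : E) (g : seq (cedg * bool)) : nat :=
  (absz ((npos e g)%:Z - (nneg e g)%:Z)%R) %% m.

Definition dQ (g : seq (cedg * bool)) : rat :=
  (\sum_(e : E) \sum_(T in trees | e \notin T)
     ((Ne e)%:R)^-1 * (minn (phi e g) (m - phi e g))%:R)%R.
End FinGraph.

From Pilot Require Import Defs.
From HB Require Import structures.
From mathcomp Require Import all_boot all_order all_algebra.
From mathcomp Require Import zify.
From Stdlib Require Import ClassicalEpsilon.
Import Order.TTheory GRing.Theory Num.Theory.
Set Implicit Arguments. Unset Strict Implicit. Unset Printing Implicit Defensive.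
Local Open Scope ring_scope.

(* Let g be a d-geodesic from x to y and a its projected 1-chain (the
   signed number of traversals of each edge).  Since N_e > 0, d_Q(x,y) is the
   total Z_m-norm D = sum_e |a_e|_m, and D <= |g| = d(x,y) as |a_e|_m <= |a_e|.
   Conversely, if D is below the girth, replace each a_e by its least-residue
   representative b_e (|b_e| <= m/2).  The chain b has total mass D and, modulo
   m, the boundary of a walk from x to y; as it is lighter than every cycle its
   support is a forest, and since m >= 3 one of its leaves lies at the start.
   Peeling leaf edges off one at a time realizes b by a walk of X of length D.
   Its lift from x ends at y, because the sheet coordinate of a lift only
   depends on the chain modulo m; hence d(x,y) <= D. *)

(* [pbool] reflects propositions classically; it lets ex_minnP/ex_maxnP
   range over propositional properties of lengths. *)
Lemma pboolE (P : Prop) : pbool P <-> P.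
Proof. by rewrite /pbool; case: excluded_middle_informative. Qed.

Section Walks.
Variables (V E : Type) (src tgt : E -> V).
Notation walk := (is_walk src tgt).
Notation dstart := (dstart src tgt).
Notation dend := (dend src tgt).

Lemma walk_cat x p q y z : walk x p y -> walk y q z -> walk x (p ++ q) z.
Proof.
elim: p x => [|d p IH] x /=; first by move=> ->.
by case=> <- H1 H2; split=> //; apply: IH H1 H2.
Qed.

Lemma walk_catP x p q z : walk x (p ++ q) z -> exists y, walk x p y /\ walk y q z.
Proof.
elim: p x => [|d p IH] x /=; first by exists x.
by case=> <- /IH [y [H1 H2]]; exists y.
Qed.

Lemma walk_vertices x p y : walk x p y -> rcons (map dstart p) y = x :: map dend p.
Proof.
elim: p x => [|d p IH] x /=; first by move=> ->.
by case=> <- /IH ->.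
Qed.

Definition flip (d : E * bool) : E * bool := (d.1, ~~ d.2).
Definition rev_walk (p : seq (E * bool)) : seq (E * bool) := rev (map flip p).

Lemma dstart_flip d : dstart (flip d) = dend d.
Proof. by rewrite /Defs.dstart /Defs.dend /=; case: d.2. Qed.

Lemma dend_flip d : dend (flip d) = dstart d.
Proof. by rewrite /Defs.dstart /Defs.dend /=; case: d.2. Qed.

Lemma walk_rev x p y : walk x p y -> walk y (rev_walk p) x.
Proof.
elim: p x => [|d p IH] x /=; first by move=> ->.
case=> <- /IH Hp; rewrite /rev_walk /= rev_cons -cats1; apply: walk_cat Hp _.
by rewrite /= dstart_flip dend_flip.
Qed.

Lemma dend_rev_walk p : map dend (rev_walk p) = rev (map dstart p).
Proof.
rewrite /rev_walk map_rev -map_comp; congr rev.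
by apply: eq_map => d /=; rewrite dend_flip.
Qed.

Lemma size_rev_walk p : size (rev_walk p) = size p.
Proof. by rewrite size_rev size_map. Qed.
End Walks.

Section Chains.
Variables (V : eqType) (E : finType) (src tgt : E -> V).
Notation walk := (is_walk src tgt).
Notation dstart := (dstart src tgt).
Notation dend := (dend src tgt).

Definition dart_chain (d : E * bool) (e : E) : int :=
  if d.1 == e then (if d.2 then 1 else -1) else 0.

Definition chain (p : seq (E * bool)) (e : E) : int := \sum_(d <- p) dart_chain d e.

Definition boundary (b : E -> int) (z : V) : int :=
  \sum_(e : E) b e * ((tgt e == z)%:Z - (src e == z)%:Z).

Definition delta (x y z : V) : int := (y == z)%:Z - (x == z)%:Z.

Lemma chain_cons d p e : chain (d :: p) e = dart_chain d e + chain p e.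
Proof. by rewrite /chain big_cons. Qed.

Lemma chain_cat p q e : chain (p ++ q) e = chain p e + chain q e.
Proof. by rewrite /chain big_cat. Qed.

Lemma chain_avoid p e : all (fun d => d.1 != e) p -> chain p e = 0.
Proof.
move=> /allP Hp; rewrite /chain big1_seq // => d /andP [_ /Hp /negbTE].
by rewrite /dart_chain => ->.
Qed.

Lemma eq_boundary b1 b2 z : b1 =1 b2 -> boundary b1 z = boundary b2 z.
Proof. by move=> H; apply: eq_bigr => e _; rewrite H. Qed.

Lemma boundaryD b1 b2 z : boundary (fun e => b1 e + b2 e) z = boundary b1 z + boundary b2 z.
Proof. by rewrite /boundary -big_split; apply: eq_bigr => e _; rewrite mulrDl. Qed.

Lemma boundaryB b1 b2 z : boundary (fun e => b1 e - b2 e) z = boundary b1 z - boundary b2 z.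
Proof. by rewrite /boundary -sumrB; apply: eq_bigr => e _; rewrite mulrBl. Qed.

Lemma boundary_dart d z : boundary (dart_chain d) z = delta (dstart d) (dend d) z.
Proof.
rewrite /boundary (bigD1 d.1) //= big1 ?addr0 => [|e /negbTE]; last first.
  by rewrite /dart_chain eq_sym => ->; rewrite mul0r.
rewrite /dart_chain eqxx /delta /Defs.dstart /Defs.dend.
by case: d.2; rewrite ?mul1r ?mulN1r ?opprB.
Qed.

Lemma boundary_walk x p y z : walk x p y -> boundary (chain p) z = delta x y z.
Proof.
elim: p x => [|d p IH] x /=.
  by move=> ->; rewrite /boundary big1 /delta ?subrr // => e _; rewrite /chain big_nil mul0r.
case=> <- /IH Hp.
rewrite (eq_boundary _ (chain_cons d p)) boundaryD boundary_dart Hp /delta.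
by rewrite addrC addrA subrK.
Qed.

Lemma sum_abs_chain p : (\sum_e `|chain p e| <= size p)%N.
Proof.
elim: p => [|d p IH] /=; first by rewrite big1 // => e _; rewrite /chain big_nil.
apply: (@leq_trans (\sum_e ((d.1 == e) + `|chain p e|)%N)).
  apply: leq_sum => e _; rewrite chain_cons /dart_chain; case: eqP => _; last by rewrite add0r.
  by case: d.2; lia.
rewrite big_split /= (bigD1 d.1) //= eqxx big1 => [|e /negbTE]; last by rewrite eq_sym => ->.
by rewrite addn0 add1n ltnS.
Qed.
End Chains.

Section SimpleWalks.
Variables (V E : eqType) (src tgt : E -> V).
Notation walk := (is_walk src tgt).
Notation dstart := (dstart src tgt).
Notation dend := (dend src tgt).

Lemma dart_endpoints d z :
  (z == src d.1) || (z == tgt d.1) = (z == dstart d) || (z == dend d).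
Proof. by rewrite /Defs.dstart /Defs.dend; case: d.2; rewrite // orbC. Qed.

Lemma walk_split_at w p z w' : walk w p z -> w' \in w :: map dend p ->
  exists p1 p2, p = p1 ++ p2 /\ walk w p1 w' /\ walk w' p2 z.
Proof.
elim: p w => [|d p IH] w /=.
  by move=> ->; rewrite inE => /eqP ->; exists [::], [::].
case=> <- Hw; rewrite inE => /orP [/eqP -> | Hin]; first by exists [::], (d :: p).
have [p1 [p2 [-> [H1 H2]]]] := IH _ Hw Hin.
by exists (d :: p1), p2.
Qed.

Lemma walk_end_mem x p y : walk x p y -> p != [::] -> y \in map dend p.
Proof.
elim: p x => [|d p IH] x //= [_ Hw] _.
case: p IH Hw => [|d1 p] IH Hw; first by move: Hw => /= ->; rewrite inE.
by rewrite inE (IH _ Hw) ?orbT.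
Qed.

Lemma simple_walk_last_dart x p y d' : walk x p y -> uniq (x :: map dend p) ->
  d' \in p -> (y == src d'.1) || (y == tgt d'.1) -> d' = last d' p.
Proof.
elim: p x => [|d p IH] x //=.
case=> <- Hw /andP [Hx Hu]; rewrite inE => /orP [/eqP Hd | Hin] Hy; last first.
  by have := IH _ Hw Hu Hin Hy; case: p {IH Hw Hu Hx} Hin.
case: p IH Hw Hx Hu Hy => [|d1 p] IH Hw Hx Hu Hy /=; first by rewrite Hd.
exfalso; have Hyin := walk_end_mem Hw isT.
move: Hy; rewrite Hd dart_endpoints => /orP [] /eqP Hy.
- by move: Hx; rewrite -Hy inE Hyin orbT.
- by move: Hu; rewrite /= -Hy Hyin.
Qed.

Lemma simple_walk_edges_uniq x p y : walk x p y -> uniq (x :: map dend p) ->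
  uniq (map fst p).
Proof.
elim: p x => [|d p IH] x //=.
case=> <- Hw /andP [Hx Hu]; rewrite (IH _ Hw Hu) andbT.
apply/negP => /mapP [d' Hd' Hedge].
have : (dstart d == dstart d') || (dstart d == dend d').
  by rewrite -dart_endpoints -Hedge /Defs.dstart; case: d.2; rewrite eqxx ?orbT.
move=> /orP [] /eqP Heq; move: Hx; rewrite Heq /=; last by rewrite inE map_f ?orbT.
by rewrite -(walk_vertices Hw) mem_rcons inE map_f ?orbT.
Qed.
End SimpleWalks.

(* A nonempty acyclic S has two distinct leaves: the ends of a longest simple
   S-path. *)
Section Forests.
Variables (V E : finType) (src tgt : E -> V) (S : pred E).
Notation walk := (is_walk src tgt).
Notation dstart := (dstart src tgt).
Notation dend := (dend src tgt).

Definition simple_path w p z :=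
  walk w p z /\ all (fun d => S d.1) p /\ uniq (w :: map dend p).

Definition leaf z e := S e /\ ((src e == z) != (tgt e == z)) /\
  forall e', e' != e -> S e' -> (src e' != z) && (tgt e' != z).

Definition acyclic := forall v p, is_cycle src tgt v p -> ~ all (fun d => S d.1) p.

Lemma simple_path_size w p z : simple_path w p z -> (size p < #|V|)%N.
Proof.
case=> _ [_ Hu]; have := uniq_leq_size Hu (s2 := enum V) (fun x _ => mem_enum V x).
by rewrite /= size_map cardE.
Qed.

Lemma simple_path_rev w p z : simple_path w p z -> simple_path z (rev_walk p) w.
Proof.
case=> Hw [Ha Hu]; split; first exact: walk_rev.
split; first by rewrite /rev_walk all_rev all_map.
by rewrite dend_rev_walk -rev_rcons rev_uniq (walk_vertices Hw).
Qed.

Lemma simple_path_edge e : S e -> src e != tgt e ->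
  simple_path (src e) [:: (e, true)] (tgt e).
Proof. by move=> Se He; split; [|split]; rewrite /= ?Se ?inE ?He. Qed.

Lemma simple_path_rcons w p z d : simple_path w p z -> dstart d = z -> S d.1 ->
  dend d \notin w :: map dend p -> simple_path w (rcons p d) (dend d).
Proof.
case=> Hw [Ha Hu] Hd Sd Hnew; split; first by rewrite -cats1; apply: walk_cat Hw _.
by rewrite all_rcons Sd map_rcons -rcons_cons rcons_uniq Hnew Hu.
Qed.

Lemma simple_path_close w p z d : simple_path w p z -> p != [::] ->
  dstart d = z -> S d.1 -> d.1 != (last d p).1 -> dend d \in w :: map dend p ->
  exists v q, is_cycle src tgt v q /\ all (fun d => S d.1) q.
Proof.
case=> Hw [Ha Hu] Hne Hd Sd Hlast Hin.
have [p1 [p2 [Ep [H1 H2]]]] := walk_split_at Hw Hin.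
have Hu2 : uniq (dend d :: map dend p2).
  move: Hu; rewrite Ep map_cat -cat_cons cat_uniq => /and3P [_ Hdisj Hu2].
  rewrite /= Hu2 andbT; apply: contra Hdisj => Hd2; apply/hasP; exists (dend d) => //.
  by rewrite -(walk_vertices H1) mem_rcons mem_head.
exists (dend d), (rcons p2 d); split; last first.
  by rewrite all_rcons Sd; move: Ha; rewrite Ep all_cat => /andP [].
split; first by case: p2 {Ep H2 Hu2}.
split; first by rewrite -cats1; apply: walk_cat H2 _; split.
split; last by rewrite map_rcons Hd (walk_vertices H2).
rewrite map_rcons rcons_uniq (simple_walk_edges_uniq H2 Hu2) andbT.
apply/mapP => -[d' Hd' Hedge]; move/eqP: Hlast; apply.
have Hz : (z == src d'.1) || (z == tgt d'.1).
  by rewrite -Hedge dart_endpoints Hd eqxx.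
rewrite Ep last_cat Hedge {1}(simple_walk_last_dart H2 Hu2 Hd' Hz).
by case: p2 Hd' {Ep H2 Hu2 Hz}.
Qed.

Lemma longest_path_leaf w p z : acyclic -> simple_path w p z -> p != [::] ->
  (forall w' p' z', simple_path w' p' z' -> (size p' <= size p)%N) ->
  exists e, leaf z e.
Proof.
move=> Hac Hsp Hne Hmax; have [Hw [Ha Hu]] := Hsp.
case/lastP E0: p Hne => [//|p0 dl] _.
have Hw' : walk w (p0 ++ [:: dl]) z by rewrite cats1 -E0.
have [y0 [Hw0 Hdl]] := walk_catP Hw'.
have [Hy0 Hz] : dstart dl = y0 /\ dend dl = z := Hdl.
have Hy0z : y0 != z.
  apply: contraTneq Hu => Hyz; rewrite E0 map_rcons -rcons_cons rcons_uniq Hz -Hyz.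
  by rewrite -(walk_vertices Hw0) mem_rcons mem_head.
exists dl.1; split; first by move: Ha; rewrite E0 all_rcons => /andP [].
split.
  move: Hy0 Hz Hy0z; rewrite /Defs.dstart /Defs.dend.
  by case: dl.2 => <- <- /negbTE ->; rewrite eqxx.
move=> e' He' Se'; apply/negPn/negP; rewrite negb_and !negbK => Hz'.
pose d := (e', src e' == z).
have Hd : dstart d = z by rewrite /Defs.dstart /=; case: eqP Hz' => //= _ /eqP.
case: (boolP (dend d \in w :: map dend p)) => Hin.
  have Hlast : d.1 != (last d p).1 by rewrite E0 last_rcons.
  have Hne : p != [::] by rewrite E0 -size_eq0 size_rcons.
  have [v [q [Hc Hq]]] := simple_path_close Hsp Hne Hd Se' Hlast Hin.
  exact: Hac Hc Hq.
have := Hmax _ _ _ (simple_path_rcons Hsp Hd Se' Hin).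
by rewrite size_rcons ltnn.
Qed.

(* Take a longest simple S-path (it has an edge, since S is nonempty and an
   S-loop would be a cycle); both of its ends are leaves. *)
Lemma acyclic_two_leaves : acyclic -> (exists e, S e) ->
  exists z1 z2 e1 e2, z1 != z2 /\ leaf z1 e1 /\ leaf z2 e2.
Proof.
move=> Hac [e Se].
have Hloop : src e != tgt e.
  apply/eqP => Hl; apply: (Hac (src e) [:: (e, true)]); last by rewrite /= Se.
  by do 2?split=> //.
pose P n := pbool (exists w p z, simple_path w p z /\ size p = n).
have P1 : P 1%N.
  apply/pboolE; exists (src e), [:: (e, true)], (tgt e).
  by split=> //; apply: simple_path_edge.
have Pbound n : P n -> (n <= #|V|)%N.
  by move=> /pboolE [w [p [z [Hs <-]]]]; exact: ltnW (simple_path_size Hs).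
case: (ex_maxnP (ex_intro P 1%N P1) Pbound) => n /pboolE [w [p [z [Hs Hn]]]] Hmx.
have Hmax w' p' z' : simple_path w' p' z' -> (size p' <= size p)%N.
  by move=> H; rewrite Hn; apply: Hmx; apply/pboolE; exists w', p', z'.
have Hne : p != [::] by rewrite -size_eq0 Hn -lt0n (Hmx _ P1).
have [e2 L2] := longest_path_leaf Hac Hs Hne Hmax.
have [e1 L1] : exists e1, leaf w e1.
  apply: longest_path_leaf Hac (simple_path_rev Hs) _ _.
    by rewrite -size_eq0 size_rev_walk size_eq0.
  by move=> w' p' z' /Hmax; rewrite size_rev_walk.
exists w, z, e1, e2; split=> //.
case: Hs => Hw [_ Hu]; apply: contraTneq Hu => ->.
by rewrite /= (walk_end_mem Hw Hne).
Qed.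
End Forests.

Lemma sum_abs_eq0 (E : finType) (b : E -> int) :
  (\sum_e `|b e|)%N = 0%N -> forall e, b e = 0.
Proof.
by move=> H e; move: H; rewrite (bigD1 e) //= => H; apply/eqP; rewrite -absz_eq0; lia.
Qed.

Lemma support_card_le (E : finType) (b : E -> int) :
  (#|[pred e | b e != 0]| <= \sum_e `|b e|)%N.
Proof.
rewrite -sum1_card big_mkcond /=; apply: leq_sum => e _.
by case: ifP => //; rewrite inE /= -absz_gt0.
Qed.

Lemma small_residue_eq (m : nat) (t c : int) : (3 <= m)%N -> (1 <= `|t|)%N ->
  (2 * `|t| <= m)%N -> -1 <= c <= 1 -> (m%:Z %| t - c)%Z -> t = c /\ c != 0.
Proof.
move=> Hm Ht Htm Hc; rewrite dvdzE absz_nat.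
case: (eqVneq (t - c) 0) => [/eqP | Htc].
  by rewrite subr_eq0 => /eqP <-; split=> //; rewrite -absz_eq0; lia.
move=> /dvdn_leq; rewrite absz_gt0 Htc => /(_ isT) Hle; exfalso.
by case/andP: Hc => Hc1 Hc2; lia.
Qed.

(* Let b be an integer chain with coefficients in
   [-m/2, m/2] whose boundary is congruent modulo m to that of a walk from u to
   v.  If its total mass n is smaller than every cycle length, the support of b
   is a forest, a leaf of which must sit at u; peeling off the leaf edge and
   iterating produces a walk from u to v of length n with chain exactly b. *)
Section Realization.
Variables (V E : finType) (src tgt : E -> V) (m : nat).
Hypothesis m_ge3 : (3 <= m)%N.
Notation walk := (is_walk src tgt).
Notation dstart := (dstart src tgt).
Notation dend := (dend src tgt).
Local Notation support b := (fun e => b e != 0).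

Definition boundary_congr (b : E -> int) (u v : V) : Prop :=
  forall z, (m%:Z %| boundary src tgt b z - delta u v z)%Z.

Definition half_bounded (b : E -> int) : Prop := forall e, (2 * `|b e| <= m)%N.

Lemma boundary_leaf b z e : leaf src tgt (support b) z e ->
  boundary src tgt b z = b e * ((tgt e == z)%:Z - (src e == z)%:Z).
Proof.
case=> _ [_ H]; rewrite /boundary (bigD1 e) //= big1 ?addr0 // => e' He'.
case: (eqVneq (b e') 0) => [-> | Hb]; first by rewrite mul0r.
by case/andP: (H e' He' Hb) => /negbTE -> /negbTE ->; rewrite subrr mulr0.
Qed.

(* A chain lighter than every cycle has acyclic support: a cycle uses
   distinct edges. *)
Lemma support_acyclic b :
  (forall v p, is_cycle src tgt v p -> (\sum_e `|b e| < size p)%N) ->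
  acyclic src tgt (support b).
Proof.
move=> Hcyc v p Hc Hall; have := Hcyc _ _ Hc.
case: Hc => _ [_ [Hu _]].
have : (size (map fst p) <= #|[pred e | b e != 0]|)%N.
  rewrite cardE; apply: uniq_leq_size => // e /mapP [d Hd ->].
  by rewrite mem_enum /=; move/allP: Hall => /(_ d Hd).
by have := support_card_le b; rewrite size_map; lia.
Qed.

Lemma leaf_boundary b u v z e : half_bounded b -> boundary_congr b u v ->
  leaf src tgt (support b) z e -> boundary src tgt b z = delta u v z /\ delta u v z != 0.
Proof.
move=> Hb Hbd Hl; apply: small_residue_eq m_ge3 _ _ _ (Hbd z).
- rewrite (boundary_leaf Hl); case: Hl => Se [Hx _].
  by move: Hx Se; case: (src e == z); case: (tgt e == z) => //= _; lia.
- rewrite (boundary_leaf Hl); case: Hl => _ [Hx _].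
  by move: Hx (Hb e); case: (src e == z); case: (tgt e == z) => //= _; lia.
- by rewrite /delta; case: (v == z); case: (u == z).
Qed.

(* Of the two distinct leaves of the support, one is the start u: the
   boundary is nonzero at both leaves, and delta u v vanishes outside {u, v}. *)
Lemma source_leaf b u v : half_bounded b -> boundary_congr b u v ->
  acyclic src tgt (support b) -> (exists e, b e != 0) ->
  exists e, leaf src tgt (support b) u e /\ boundary src tgt b u = -1.
Proof.
move=> Hb Hbd Hac Hne.
have [z1 [z2 [e1 [e2 [Hz12 [L1 L2]]]]]] := acyclic_two_leaves Hac Hne.
have [Bz1 Nz1] := leaf_boundary Hb Hbd L1.
have [Bz2 Nz2] := leaf_boundary Hb Hbd L2.
have Huv : u != v by apply: contraNneq Nz1 => ->; rewrite /delta subrr.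
have Bu : delta u v u = -1 by rewrite /delta eqxx eq_sym (negbTE Huv).
have at_u z : delta u v z != 0 -> z != v -> z = u.
  move=> + Hv; rewrite /delta (eq_sym v) (negbTE Hv) (eq_sym u).
  by case: (z =P u) => // _; rewrite subrr eqxx.
case: (eqVneq z1 v) => [Ez1 | Nv1].
- have Hz2 : z2 = u by apply: at_u Nz2 _; rewrite -Ez1 eq_sym.
  by subst z2; exists e2; rewrite Bz2 Bu.
- have Hz1 : z1 = u by apply: at_u Nz1 Nv1.
  by subst z1; exists e1; rewrite Bz1 Bu.
Qed.

(* One peeling step: the leaf edge at u, traversed away from u, is the first
   dart d of the walk; removing it lowers the mass by one and moves the
   start of the congruence to the far end of d. *)
Lemma peel_dart b u v n : (\sum_e `|b e| = n.+1)%N -> half_bounded b ->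
  boundary_congr b u v ->
  (forall v0 p, is_cycle src tgt v0 p -> (n.+1 < size p)%N) ->
  exists d, [/\ dstart d = u, (\sum_e `|b e - dart_chain d e| = n)%N,
    forall e, (`|b e - dart_chain d e| <= `|b e|)%N &
    boundary_congr (fun e => b e - dart_chain d e) (dend d) v].
Proof.
move=> Hs Hb Hbd Hcyc.
have Hac : acyclic src tgt (support b).
  by apply: support_acyclic => v0 p; rewrite Hs; apply: Hcyc.
have Hne : exists e, b e != 0.
  case: (pickP (support b)) => [e He | H0]; first by exists e.
  by move: Hs; rewrite big1 // => e _; move/negbFE/eqP: (H0 e) => ->.
have [e [Le Bu]] := source_leaf Hb Hbd Hac Hne.
pose d := (e, src e == u).
have Hd : dstart d = u.
  rewrite /Defs.dstart /=; case Hsrc: (src e == u); first exact/eqP.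
  by case: Le => _ [+ _]; rewrite Hsrc; case: (tgt e =P u).
have Hbe : b e = dart_chain d e.
  move: Bu; rewrite (boundary_leaf Le) /dart_chain /= eqxx; case: Le => _ [Hx _].
  by move: Hx; case: (src e == u); case: (tgt e == u) => //= _; lia.
have Hb'e : b e - dart_chain d e = 0 by rewrite Hbe subrr.
have Hb'o e' : e' != e -> b e' - dart_chain d e' = b e'.
  by move=> He'; rewrite /dart_chain /= eq_sym (negbTE He') subr0.
exists d; split=> //.
- have Hbe1 : `|b e|%N = 1%N by rewrite Hbe /dart_chain /= eqxx; case: (src e == u).
  rewrite (bigD1 e) //= Hb'e add0n; move: Hs; rewrite (bigD1 e) //= Hbe1 add1n => -[<-].
  by apply: eq_bigr => e' He'; rewrite Hb'o.
- by move=> e'; case: (eqVneq e' e) => [-> | He']; rewrite ?Hb'e ?Hb'o.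
- move=> z; have -> : boundary src tgt (fun e => b e - dart_chain d e) z
      - delta (dend d) v z = boundary src tgt b z - delta u v z.
    rewrite boundaryB boundary_dart Hd /delta.
    by move: (boundary src tgt b z) (dend d == z)%:Z (u == z)%:Z (v == z)%:Z => c x y w; lia.
  exact: Hbd.
Qed.

Lemma walk_of_chain n b u v : (\sum_e `|b e| = n)%N -> half_bounded b ->
  (forall v0 p, is_cycle src tgt v0 p -> (n < size p)%N) -> boundary_congr b u v ->
  exists p, [/\ walk u p v, size p = n & chain p =1 b].
Proof.
elim: n b u => [|n IH] b u Hs Hb Hcyc Hbd.
  have b0 := sum_abs_eq0 Hs.
  case: (eqVneq u v) => [<- | Huv].
    by exists [::]; split=> // e; rewrite b0 /chain big_nil.
  exfalso; move: (Hbd v); rewrite /boundary big1 => [|e _]; last by rewrite b0 mul0r.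
  rewrite /delta eqxx (negbTE Huv) dvdzE /= => Hdvd.
  by have := dvdn_leq (ltn0Sn _) Hdvd; lia.
have [d [Hd Hs' Hle Hbd']] := peel_dart Hs Hb Hbd Hcyc.
have Hb' : half_bounded (fun e => b e - dart_chain d e).
  by move=> e; apply: leq_trans (Hb e); rewrite leq_mul2l Hle orbT.
have [p [Hw Hsz Hch]] := IH _ _ Hs' Hb' (fun v0 p Hc => ltnW (Hcyc v0 p Hc)) Hbd'.
exists (d :: p); split; [by split | by rewrite /= Hsz |].
by move=> e; rewrite chain_cons Hch subrKC.
Qed.
End Realization.

(* Since T0 connects X and the
   generators rho(e) span K, the cover is connected, so geodesics exist. *)
Section Cover.
Variables (V E : finType) (src tgt : E -> V) (m : nat) (T0 : {set E}).
Notation walk := (is_walk src tgt).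
Notation cwalk := (is_walk (@csrc V E src m T0) (@ctgt V E tgt m T0)).
Notation K := (@Kgrp E m T0).
Notation rho := (@rho E m T0).

Definition voltage (c : E -> int) : K := \sum_e rho e *~ c e.

Definition proj (g : seq (@cedg E m T0 * bool)) : seq (E * bool) :=
  map (fun d => (d.1.1, d.2)) g.

Lemma voltage_nil : voltage (chain [::]) = 0.
Proof. by rewrite /voltage big1 // => e _; rewrite /chain big_nil mulr0z. Qed.

Lemma voltage_cons d p :
  voltage (chain (d :: p)) = (if d.2 then rho d.1 else - rho d.1) + voltage (chain p).
Proof.
rewrite /voltage (eq_bigr (fun e => rho e *~ dart_chain d e + rho e *~ chain p e)); last first.
  by move=> e _; rewrite chain_cons mulrzDr.
rewrite big_split /= (bigD1 d.1) //= big1 ?addr0 => [|e /negbTE]; last first.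
  by rewrite /dart_chain eq_sym => ->; rewrite mulr0z.
by rewrite /dart_chain eqxx; case: d.2; rewrite ?mulr1z ?mulrN1z.
Qed.

Lemma cover_walk_proj x g y : cwalk x g y ->
  walk x.1 (proj g) y.1 /\ y.2 = x.2 + voltage (chain (proj g)).
Proof.
elim: g x => [|d g IH] x /=; first by move=> ->; rewrite voltage_nil addr0.
case=> <- /IH [Hw ->]; split.
  split; first by rewrite /Defs.dstart /=; case: d.2.
  have -> : Defs.dend src tgt (d.1.1, d.2)
      = (Defs.dend (@csrc V E src m T0) (@ctgt V E tgt m T0) d).1.
    by rewrite /Defs.dend /=; case: d.2.
  exact: Hw.
rewrite (voltage_cons (d.1.1, d.2)) /= addrA; congr (_ + _).
by rewrite /Defs.dstart /Defs.dend /=; case: d.2 => //=; rewrite addrK.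
Qed.

Lemma cover_walk_lift u p v k : walk u p v ->
  exists g, cwalk (u, k) g (v, k + voltage (chain p)) /\ proj g = p.
Proof.
elim: p u k => [|d p IH] u k /=.
  by move=> ->; exists [::]; rewrite voltage_nil addr0.
case=> <- Hw.
pose k1 := if d.2 then k + rho d.1 else k - rho d.1.
have [g [Hg Hp]] := IH _ k1 Hw.
exists (((d.1, if d.2 then k else k1), d.2) :: g); split; last first.
  by rewrite /proj /= -/(proj g) Hp; case: (d) => ? [].
split; first by rewrite /Defs.dstart /= /k1 /csrc /ctgt; case: d.2 => //=; rewrite subrK.
rewrite voltage_cons addrA -/k1.
move: Hg; congr (cwalk _ g _); rewrite /Defs.dend /k1 /=; by case: d.2.
Qed.

Lemma rho_tree e : e \in T0 -> rho e = 0.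
Proof.
move=> He; apply/ffunP => c; rewrite !ffunE; case: eqP => // Hc.
by move: (valP c); rewrite Hc He.
Qed.

Lemma voltage_tree p : all (fun d => d.1 \in T0) p -> voltage (chain p) = 0.
Proof.
elim: p => [|d p IH] /=; first by rewrite voltage_nil.
by case/andP=> Hd /IH; rewrite voltage_cons rho_tree // => ->; case: d.2; rewrite ?oppr0 addr0.
Qed.

Definition cover_reachable (x y : @cvert V E m T0) : Prop := exists g, cwalk x g y.

Lemma cover_reachable_trans x y z :
  cover_reachable x y -> cover_reachable y z -> cover_reachable x z.
Proof. by move=> [g1 H1] [g2 H2]; exists (g1 ++ g2); apply: walk_cat H1 H2. Qed.

Hypothesis T0_connects : forall u v, exists p, walk u p v /\ all (fun d => d.1 \in T0) p.

(* Lifts of tree walks stay in their sheet. *)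
Lemma cover_reachable_sheet u v k : cover_reachable (u, k) (v, k).
Proof.
have [p [Hw Ha]] := T0_connects u v.
have [g [Hg _]] := cover_walk_lift k Hw.
by exists g; move: Hg; rewrite voltage_tree // addr0.
Qed.

Lemma cover_reachable_rho u k e : cover_reachable (u, k) (u, k + rho e).
Proof.
apply: cover_reachable_trans (cover_reachable_sheet u (src e) k) _.
apply: (@cover_reachable_trans _ (tgt e, k + rho e)); last exact: cover_reachable_sheet.
by exists [:: ((e, k), true)].
Qed.

(* Every translate of a sheet is reachable: decompose the shift f as a sum
   of generators rho(e), each realized by crossing e once. *)
Lemma cover_reachable_shift u k f : cover_reachable (u, k) (u, k + f).
Proof.
have -> : f = \sum_(c : cedge T0) rho (val c) *+ (f c : nat).
  apply/ffunP => c'; rewrite sum_ffunE (bigD1 c') //= !ffunMnE !ffunE eqxx.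
  rewrite big1 ?addr0 => [|c Hc]; first by rewrite natr_Zp.
  rewrite ffunMnE ffunE; case: eqP => [/val_inj Hcc | _]; last by rewrite mul0rn.
  by move: Hc; rewrite Hcc eqxx.
elim/big_rec: _ k => [|c f' _ IH] k; first by rewrite addr0; apply: cover_reachable_sheet.
apply: (@cover_reachable_trans _ (u, k + rho (val c) *+ f c)).
  elim: (nat_of_ord (f c)) => [|n IHn].
    by rewrite mulr0n addr0; apply: cover_reachable_sheet.
  apply: cover_reachable_trans IHn _; rewrite mulrS (addrC (rho _)) addrA.
  exact: cover_reachable_rho.
by rewrite addrA; apply: IH.
Qed.

Lemma cover_connected x y : cover_reachable x y.
Proof.
case: x y => [u k] [v k'].
apply: (@cover_reachable_trans _ (u, k')); last exact: cover_reachable_sheet.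
by have := cover_reachable_shift u k (k' - k); rewrite addrC subrK.
Qed.

Lemma cover_geodesic_exists x y :
  exists g, geodesic (@csrc V E src m T0) (@ctgt V E tgt m T0) x g y.
Proof.
pose P n := pbool (exists g, cwalk x g y /\ size g = n).
have [g Hg] := cover_connected x y.
have exP : exists n, P n by exists (size g); apply/pboolE; exists g.
case: (ex_minnP exP) => n /pboolE [g' [Hg' <-]] Hmin.
by exists g'; split=> // q Hq; apply: Hmin; apply/pboolE; exists q.
Qed.

Hypothesis m_gt1 : (1 < m)%N.

Lemma voltage_congr (c c' : E -> int) : (forall e, (m%:Z %| c e - c' e)%Z) ->
  voltage c = voltage c'.
Proof.
have rho_m e : rho e *+ m = 0.
  apply/ffunP => a; rewrite ffunMnE !ffunE; case: ifP => _; last by rewrite mul0rn.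
  exact: pchar_Zp.
move=> H; apply: eq_bigr => e _; apply/eqP; rewrite -subr_eq0 -mulrzBr.
have /dvdzP [q ->] := H e.
by rewrite mulrC mulrzA -[rho e *~ m%:Z]/(rho e *+ m) rho_m mul0rz.
Qed.
End Cover.

Definition znorm (m : nat) (c : int) : nat := minn (`|c| %% m) (m - `|c| %% m).

Definition min_residue (m : nat) (c : int) : int :=
  let r := (`|c| %% m)%N in
  let r0 := if (r <= m - r)%N then r%:Z else r%:Z - m%:Z in
  if 0 <= c then r0 else - r0.

Lemma min_residueP (m : nat) (c : int) : (2 <= m)%N ->
  [/\ `|min_residue m c|%N = znorm m c, (2 * `|min_residue m c| <= m)%N
    & (m%:Z %| c - min_residue m c)%Z].
Proof.
move=> Hm; rewrite /min_residue /znorm.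
have Hr : (`|c| %% m < m)%N by rewrite ltn_mod; lia.
move: (divn_eq `|c| m) Hr; move: (`|c| %% m)%N (`|c| %/ m)%N => r q Hd Hr.
have Hc : c = `|c|%:Z \/ c = - `|c|%:Z by lia.
case Hsg: (0 <= c); case Hrr: (r <= m - r)%N; rewrite ?abszN ?absz_nat;
  (split; [lia | lia | apply/dvdzP]).
- by exists q%:Z; nia.
- by exists q.+1%:Z; nia.
- by exists (- q%:Z); nia.
- by exists (- q.+1%:Z); nia.
Qed.

(* Under the hypotheses of the theorem every N_e is positive: if some edge
   e0 lies outside T0 then T0 itself is counted by N = N_e0; otherwise all
   edges lie in T0, yet by 2-connectivity any edge e closes a cycle, whose
   chain is a nonzero cycle supported in the forest T0, impossible since at
   a leaf its boundary would be nonzero. *)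
Lemma Ne_neq0 (V E : finType) (src tgt : E -> V) (T0 : {set E}) :
  two_connected src tgt -> (exists N : nat, forall e : E, Ne src tgt e = N) ->
  spanning_tree src tgt T0 -> forall e, Ne src tgt e != 0%N.
Proof.
move=> H2 [N HN] HT0 e.
case: (pickP (fun e => e \notin T0)) => [e0 He0 | Hall].
  rewrite HN -(HN e0); apply/eqP => /cards0_eq H.
  have : T0 \in [set T in trees src tgt | e0 \notin T].
    by rewrite !inE He0 andbT; apply/pboolE.
  by rewrite H inE.
exfalso.
have [q [Hq Ha]] := H2 e (src e) (tgt e).
have Hc : is_walk src tgt (src e) (rcons q (e, false)) (src e).
  by rewrite -cats1; apply: walk_cat Hq _.
pose a := chain (rcons q (e, false)).
have Hae : a e = -1.
  by rewrite /a -cats1 chain_cat (chain_avoid Ha) /chain big_seq1 /dart_chain eqxx.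
have Hac : acyclic src tgt (fun e0 => a e0 != 0).
  move=> v p Hcy _; apply: (HT0.2 v p Hcy); apply/allP => d _.
  by move: (Hall d.1) => /negbFE.
have Hne : exists e0, a e0 != 0 by exists e; rewrite Hae.
have [z1 [_ [e1 [_ [_ [L1 _]]]]]] := acyclic_two_leaves Hac Hne.
move: (boundary_walk z1 Hc); rewrite /delta subrr (boundary_leaf L1).
case: L1 => S1 [Hx _]; move: Hx S1.
by case: (src e1 == z1); case: (tgt e1 == z1) => //= _; lia.
Qed.

Lemma lt_girth_le (V E : finType) (src tgt : E -> V) (r1 r2 : rat) :
  r1 <= r2 -> lt_girth src tgt r2 -> lt_girth src tgt r1.
Proof. by move=> H12 H v p Hc; apply: le_lt_trans H12 (H v p Hc). Qed.

Section Metric.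
Variables (V E : finType) (src tgt : E -> V) (m : nat) (T0 : {set E}).
Notation geod x g y := (geodesic (@csrc V E src m T0) (@ctgt V E tgt m T0) x g y).

Lemma npos_sub_nneg e (g : seq (@cedg E m T0 * bool)) :
  (npos e g)%:Z - (nneg e g)%:Z = chain (proj g) e.
Proof.
elim: g => [|d g IH]; first by rewrite /chain big_nil.
rewrite /npos /nneg /= -/(npos e g) -/(nneg e g) chain_cons -IH /dart_chain /=.
by case: (d.1.1 == e); case: d.2 => /=; lia.
Qed.

Lemma dQ_znorm (g : seq (@cedg E m T0 * bool)) : (forall e, Ne src tgt e != 0%N) ->
  dQ src tgt g = (\sum_e znorm m (chain (proj g) e))%:R.
Proof.
move=> HNe; rewrite /dQ natr_sum; apply: eq_bigr => e _.
rewrite (eq_bigl (fun T => T \in [set T in trees src tgt | e \notin T])) => [|T]; last first.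
  by rewrite !inE.
rewrite sumr_const -/(Ne src tgt e) -[(_ * _) *+ _]mulr_natr mulrAC mulVf ?pnatr_eq0 //.
by rewrite mul1r /phi /znorm npos_sub_nneg.
Qed.

(* The easy inequality d_Q <= d: |c|_m <= |c| and the chain of a walk has
   mass at most its length. *)
Lemma znorm_sum_le_size (g : seq (@cedg E m T0 * bool)) :
  (\sum_e znorm m (chain (proj g) e) <= size g)%N.
Proof.
apply: (@leq_trans (\sum_e `|chain (proj g) e|)).
  by apply: leq_sum => e _; rewrite /znorm geq_min leq_mod.
by have := sum_abs_chain (proj g); rewrite size_map.
Qed.

(* Let D be the total Z_m-norm of the chain a of
   a geodesic from x to y.  If D is below the girth, the least-residue
   representatives of a form a chain realized by a walk of X of length D,
   whose lift from x ends at y because its voltage agrees with that of a;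
   so the geodesic is no longer than D. *)
Lemma geodesic_size_le x y g : (3 <= m)%N -> geod x g y ->
  lt_girth src tgt (\sum_e znorm m (chain (proj g) e))%:R ->
  (size g <= \sum_e znorm m (chain (proj g) e))%N.
Proof.
move=> m_ge3 [Hg Hmin] Hgirth; have m_gt1 : (1 < m)%N by lia.
have [Hw Hk] := cover_walk_proj Hg.
set a := chain (proj g) in Hw Hk Hgirth *.
pose b e := min_residue m (a e).
have a_b e : (m%:Z %| a e - b e)%Z by case: (min_residueP (a e) m_gt1).
have Hs : (\sum_e `|b e| = \sum_e znorm m (a e))%N.
  by apply: eq_bigr => e _; case: (min_residueP (a e) m_gt1).
have Hb : half_bounded m b by move=> e; case: (min_residueP (a e) m_gt1).
have Hcyc v p : is_cycle src tgt v p -> (\sum_e znorm m (a e) < size p)%N.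
  by move=> /Hgirth; rewrite ltr_nat.
have Hbd : boundary_congr src tgt m b x.1 y.1.
  move=> z; rewrite -(boundary_walk z Hw) -boundaryB.
  apply: rpred_sum => e _; apply: dvdz_mulr.
  by rewrite -opprB rpredN; apply: a_b.
have [q [Hq <- Hcq]] := walk_of_chain m_ge3 Hs Hb Hcyc Hbd.
have [g' [Hg' <-]] := @cover_walk_lift V E src tgt m T0 _ _ _ x.2 Hq.
rewrite (size_map (fun d => (d.1.1, d.2))); apply: Hmin.
have Hvolt : voltage m T0 (chain q) = voltage m T0 a.
  by apply: voltage_congr => // e; rewrite Hcq -opprB rpredN; apply: a_b.
by move: Hg'; rewrite Hvolt -Hk -!surjective_pairing.
Qed.
End Metric.

Theorem mainTheorem3 (V E : finType) (src tgt : E -> V) (m : nat)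
    (T0 : {set E}) :
  (3 <= m)%N ->
  graph_connected src tgt ->
  two_connected src tgt ->
  (exists N : nat, forall e : E, Ne src tgt e = N) ->
  spanning_tree src tgt T0 ->
  forall x y : @cvert V E m T0,
    (exists g, geodesic (@csrc V E src m T0) (@ctgt V E tgt m T0) x g y) /\
    (forall g, geodesic (@csrc V E src m T0) (@ctgt V E tgt m T0) x g y ->
       (lt_girth src tgt (@dQ V E src tgt m T0 g)
          <-> lt_girth src tgt (size g)%:R)
       /\ (lt_girth src tgt (size g)%:R -> @dQ V E src tgt m T0 g = (size g)%:R)).
Proof.
move=> m_ge3 _ X_2conn Ne_const T0_tree x y.
split; first exact: cover_geodesic_exists T0_tree.1 x y.
move=> g Hg; rewrite (dQ_znorm _ (Ne_neq0 X_2conn Ne_const T0_tree)).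
set D := (\sum_e _)%N.
have D_le_size : (D <= size g)%N := znorm_sum_le_size g.
have size_eq : lt_girth src tgt D%:R -> size g = D.
  by move=> HD; apply/eqP; rewrite eqn_leq D_le_size (geodesic_size_le m_ge3 Hg HD).
have girth_le : lt_girth src tgt (size g)%:R -> lt_girth src tgt D%:R.
  by apply: lt_girth_le; rewrite ler_nat.
split; first split.
- by move=> HD; rewrite size_eq.
- exact: girth_le.
- by move=> /girth_le /size_eq ->.
Qed.
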